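(* Let $p,q$ be positive integers with $p+q$ odd. For every $n\ge1$: (a) $\mathcal{J}^{p,q}_n$ is a subgroup of $\mathrm{Aut}(T_{n+1})$; (b) $\psi_n:\mathcal{J}^{p,q}_n\to\mathbb{Z}_{2^{\lfloor n/2\rfloor}}$ is a group homomorphism; (c) $\Delta_n:\mathcal{J}^{p,q}_n\to D_{2^{\lfloor n/2\rfloor+1}}$ is a group homomorphism.
   Context: Let $p,q$ be positive integers with $p+q$ odd. $\mathbb{Z}_{2^k}$ denotes the integers modulo $2^k$ ($\mathbb{Z}_1$ trivial); as $p+q$ is odd, division by $p+q$ and by $(p+q)^2$ is well defined in $\mathbb{Z}_{2^k}$, and integers are read modulo $2^k$. For $m\ge1$, $D_{2m}$ is the dihedral group of order $2m$, realized as pairs $(f,x)$ with $f\in\mathbb{Z}_2$, $x\in\mathbb{Z}_m$ and product $(f_1,x_1)(f_2,x_2)=(f_1+f_2,\,x_1+(-1)^{f_1}x_2)$. Define $\Phi:D_{2m}\to D_{2m}$ by $\Phi((f,x))=(f,\ \delta(f=1)(p+q)(p-q)-x)$, where $\delta(f=1)$ is $1$ if $f=1$ and $0$ otherwise. Groups $\mathrm{Aut}(T_k)$ (automorphisms of the rooted binary tree, equivalently iterated wreath products of $\mathbb{Z}_2$): $\mathrm{Aut}(T_1)$ is trivial; for $k\ge1$, $\mathrm{Aut}(T_{k+1})$ is the set of triples $g=(g_f,g_L,g_R)$ with $g_f\in\mathbb{Z}_2$, $g_L,g_R\in\mathrm{Aut}(T_k)$, with product $(f,A,B)(g,C,D)=(f+g,AC,BD)$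 if $f=0$ and $(f+g,AD,BC)$ if $f=1$. Subscripts are chained: $g_{LR}=(g_L)_R$, $g_{Lf}=(g_L)_f$, etc. Recursively define subsets $\mathcal{J}^{p,q}_n\subseteq\mathrm{Aut}(T_{n+1})$ and maps $\psi_n:\mathcal{J}^{p,q}_n\to\mathbb{Z}_{2^{\lfloor n/2\rfloor}}$, $\Delta_n:\mathcal{J}^{p,q}_n\to D_{2^{\lfloor n/2\rfloor+1}}$: $n=1$: $\mathcal{J}_1=\mathrm{Aut}(T_2)\cong\mathbb{Z}_2$, $\psi_1(g)=0$, $\Delta_1(g)=(g_f,0)$. $n=2$: $\mathcal{J}_2=\{g\in\mathrm{Aut}(T_3): g_L=g_R\}$, $\psi_2(g)=\delta(g_{Lf}=1)\in\mathbb{Z}_2$, $\Delta_2(g)=(g_f,\psi_2(g))$. $n\ge3$: $\mathcal{J}_n=\{g\in\mathrm{Aut}(T_{n+1}): g_L,g_R\in\mathcal{J}_{n-1},\ \Delta_{n-1}(g_L)=\Phi(\Delta_{n-1}(g_R))\}$; $\psi_n(g)=\dfrac{\psi_{n-1}(g_L)+\psi_{n-1}(g_R)}{p+q}$ for odd $n$, and $\psi_n(g)=\dfrac{2(\psi_{n-2}(g_{LL})+\psi_{n-2}(g_{RL}))-\delta(g_{Lf}=1)(p+q)(p-q)}{(p+q)^2}$ for even $n$ (here $2\psi_{n-2}(\cdot)$, with $\psi_{n-2}\in\mathbb{Z}_{2^{n/2-1}}$, is read in $\mathbb{Z}_{2^{n/2}}$); $\Delta_n(g)=(g_f,\ \psi_{n-1}(g_L)-\psi_{n-1}(g_R))$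 for odd $n$, and $\Delta_n(g)=(g_f,\ (p+q)\psi_n(g)-2\psi_{n-1}(g_R))$ for even $n$. *)

From mathcomp Require Import all_boot all_order all_algebra.
Set Implicit Arguments. Unset Strict Implicit. Unset Printing Implicit Defensive.
Import Order.TTheory GRing.Theory Num.Theory.
Local Open Scope ring_scope.

(* A n  represents Aut(T_{n+1}):  A 0 = Aut(T_1) trivial,
   A (k+1) = triples (g_f, g_L, g_R) with g_f : Z_2 (as bool). *)
Fixpoint A (n : nat) : Type :=
  match n with 0 => unit | S k => (bool * A k * A k)%type end.

Fixpoint aone (n : nat) : A n :=
  match n return A n with 0 => tt | S k => (false, aone k, aone k) end.

Fixpoint amul (n : nat) : A n -> A n -> A n :=
  match n return A n -> A n -> A n with
  | 0 => fun _ _ => tt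
  | S k => fun g h =>
      (g.1.1 (+) h.1.1,
       if g.1.1 then amul g.1.2 h.2 else amul g.1.2 h.1.2,
       if g.1.1 then amul g.2 h.1.2 else amul g.2 h.2)
  end.

Fixpoint ainv (n : nat) : A n -> A n :=
  match n return A n -> A n with
  | 0 => fun _ => tt
  | S k => fun g =>
      if g.1.1 then (true, ainv g.2, ainv g.1.2)
      else (false, ainv g.1.2, ainv g.2)
  end.

(* modulus 2^{floor(n/2)} and canonical representatives of Z_{2^{floor(n/2)}}
   as integers in [0, 2^{floor(n/2)}) *)
Definition md (n : nat) : int := 2%:Z ^+ n./2.
Definition zm (n : nat) (x : int) : int := (x %% md n)%Z.
(* a / b in Z_{2^{floor(n/2)}} (b odd): multiply by a Bezout inverse of b *)
Definition zdiv (n : nat) (a b : int) : int := zm n (a * (egcdz b (md n)).1).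

Section Defs.
Variables p q : int.

Fixpoint psi (n : nat) : A n -> int :=
  match n return A n -> int with
  | 0 => fun _ => 0                                  (* unused *)
  | S n1 =>
    (match n1 return (A n1 -> int) -> A (S n1) -> int with
     | 0 => fun _ _ => 0
     | S n2 => fun rec1 =>
       (match n2 return (A n2 -> int) -> (A (S n2) -> int) ->
                        A (S (S n2)) -> int with
        | 0 => fun _ _ g => if g.1.2.1.1 then 1 else 0
        | S m => fun rec2 rec1 g =>
          if odd (S (S (S m))) then
            zdiv (S (S (S m))) (rec1 g.1.2 + rec1 g.2) (p + q)
          else
            zdiv (S (S (S m)))
                 (2 * (rec2 g.1.2.1.2 + rec2 g.2.1.2)
                  - (if g.1.2.1.1 then (p + q) * (p - q) else 0))
                 ((p + q) ^+ 2)
        end) (@psi n2) rec1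
     end) (@psi n1)
  end.

(* elements of D_{2 m} with m = 2^{floor(n/2)}: pairs (f, x), x canonical rep *)
Definition dmul (n : nat) (a b : bool * int) : bool * int :=
  (a.1 (+) b.1, zm n (a.2 + (if a.1 then - b.2 else b.2))).

Definition Phi (n : nat) (a : bool * int) : bool * int :=
  (a.1, zm n ((if a.1 then (p + q) * (p - q) else 0) - a.2)).

Definition Delta (n : nat) : A n -> bool * int :=
  match n return A n -> bool * int with
  | 0 => fun _ => (false, 0)
  | 1 => fun g => (g.1.1, 0)
  | 2 => fun g => (g.1.1, @psi 2 g)
  | S ((S _) as k) => fun g =>
      if odd (S k) then (g.1.1, zm (S k) (@psi k g.1.2 - @psi k g.2))
      else (g.1.1, zm (S k) ((p + q) * @psi (S k) g - 2 * @psi k g.2))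
  end.

Fixpoint J (n : nat) : A n -> Prop :=
  match n return A n -> Prop with
  | 0 => fun _ => True                               (* unused *)
  | S n1 =>
    (match n1 return (A n1 -> Prop) -> A (S n1) -> Prop with
     | 0 => fun _ _ => True
     | S n2 =>
       match n2 return (A (S n2) -> Prop) -> A (S (S n2)) -> Prop with
       | 0 => fun _ g => g.1.2 = g.2
       | S m => fun rec1 g =>
          [/\ rec1 g.1.2, rec1 g.2 &
              @Delta (S (S m)) g.1.2 = Phi (S (S m)) (@Delta (S (S m)) g.2)]
       end
     end) (@J n1)
  end.

End Defs.

From mathcomp Require Import all_boot all_order all_algebra.
From mathcomp Require Import ring.
Import Order.TTheory GRing.Theory Num.Theory.
Set Implicit Arguments. Unset Strict Implicit. Unset Printing Implicit Defensive.
Local Open Scope ring_scope.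

(* The three claims are proved together by induction, level n from levels n - 1 and
   n - 2.  The integers computed by psi and Delta are compared through their residues
   in 'Z_(2 ^ n./2), where the congruences become ring identities and division by the
   odd number p + q is multiplication by a unit.
   J_n is a subgroup because Delta_(n-1) is a homomorphism on the subgroup J_(n-1) and
   Phi is an involutive automorphism of the dihedral group.  From an even level to the
   next odd one the modulus is unchanged, and psi_n, Delta_n are sums and differences
   of psi_(n-1) on the two children.  From an odd level to the next even one the
   modulus doubles: psi_n stays additive because the congruence
   Delta_(n-1)(c) = Phi (Delta_(n-1)(d)) defining J_n, once doubled, absorbs the carry
   [a_f = c_f = 1] (p + q)(p - q) between grandchildren; and Delta_n is a homomorphism
   because (p + q) psi_n(h) = psi_(n-1)(h_L) + psi_(n-1)(h_R) modulo 2 ^ (n/2 - 1), so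
   that the second coordinate of Delta_n(h) only changes sign when computed from h_L
   instead of h_R. *)

Arguments amul : simpl never.
Arguments psi : simpl never.
Arguments Delta : simpl never.

Definition node n f (a b : A n) : A n.+1 := (f, a, b).

Lemma A_node_ind n (P : A n.+1 -> Prop) :
  (forall f (a b : A n), P (node f a b)) -> forall g, P g.
Proof. by move=> IH [[f a] b]; apply: IH. Qed.

Lemma amul_node n f f' (a b c d : A n) :
  amul (node f a b) (node f' c d) =
  node (f (+) f') (if f then amul a d else amul a c) (if f then amul b c else amul b d).
Proof. by []. Qed.

Lemma ainv_node n f (a b : A n) :
  ainv (node f a b) = if f then node true (ainv b) (ainv a) else node false (ainv a) (ainv b).
Proof. by []. Qed.

Lemma amul1g n (g : A n) : amul (aone n) g = g.
Proof.
elim: n g => [[] //|n IH]; elim/A_node_ind=> f a b.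
by rewrite (_ : aone n.+1 = node false (aone n) (aone n)) // amul_node !IH.
Qed.

Lemma amulgV n (g : A n) : amul g (ainv g) = aone n.
Proof.
by elim: n g => [[] //|n IH]; elim/A_node_ind=> [[] a b]; rewrite ainv_node amul_node !IH.
Qed.

Lemma md_succ_odd n : odd n.+1 -> md n.+1 = md n.
Proof. by rewrite /md -uphalfE uphalf_half /= => /negbTE ->. Qed.

Lemma md_succ_even n : ~~ odd n.+1 -> md n.+1 = 2 * md n.
Proof. by rewrite /md -uphalfE uphalf_half /= negbK => ->; rewrite exprS. Qed.

Lemma zmK n x : zm n (zm n x) = zm n x.
Proof. exact: modz_mod. Qed.

Lemma zm_eqP n x y : reflect (zm n x = zm n y) (md n %| x - y)%Z.
Proof. by rewrite -eqz_mod_dvd; apply: eqP. Qed.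

Lemma zm_succ_odd n x : odd n.+1 -> zm n.+1 x = zm n x.
Proof. by rewrite /zm => /md_succ_odd ->. Qed.

Lemma zm_succ_eq n x y : zm n.+1 x = zm n.+1 y -> zm n x = zm n y.
Proof.
have md_dvd : (md n %| md n.+1)%Z.
  by case: (boolP (odd n.+1)) => [/md_succ_odd|/md_succ_even] ->; rewrite ?dvdz_mull.
by move=> /zm_eqP /(dvdz_trans md_dvd) /zm_eqP.
Qed.

Lemma zm_succ_double n x y :
  ~~ odd n.+1 -> zm n x = zm n y -> zm n.+1 (2 * x) = zm n.+1 (2 * y).
Proof.
by move=> /md_succ_even md2 /zm_eqP dvd_xy; apply/zm_eqP; rewrite md2 -mulrBr dvdz_mul2l.
Qed.

Lemma zdiv_succ_odd n a b : odd n.+1 -> zdiv n.+1 a b = zdiv n a b.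
Proof. by rewrite /zdiv /zm => /md_succ_odd ->. Qed.

Lemma coprimez_md n b : odd `|b| -> coprimez b (md n).
Proof.
by move=> odd_b; rewrite coprimezE /md abszX /= coprimeXr // coprimen2.
Qed.

(* 'Z_N is the ring Z/NZ only for N >= 2, whence the levels n.+2 below. *)
Notation res n x := (x%:~R : 'Z_(2 ^ n./2)).

Lemma zm_resP n x y : zm n.+2 x = zm n.+2 y <-> res n.+2 x = res n.+2 y.
Proof.
have N_gt1 : (1 < 2 ^ n.+2./2)%N by rewrite -{1}(expn0 2) ltn_exp2l.
have res_eq0 (z : int) : (res n.+2 z == 0) = (2 ^ n.+2./2 %| `|z|)%N.
  by case: z => k; rewrite ?NegzE ?intrN ?oppr_eq0 -val_eqE /= val_Zp_nat.
have dvd_md z : (md n.+2 %| z)%Z = (2 ^ n.+2./2 %| `|z|)%N by rewrite dvdzE /md abszX.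
rewrite (rwP (zm_eqP n.+2 x y)) dvd_md -res_eq0 intrB subr_eq0.
by split=> [/eqP|->].
Qed.

Lemma res_zm n x : res n.+2 (zm n.+2 x) = res n.+2 x.
Proof. by apply/zm_resP; rewrite zmK. Qed.

Lemma canon_res_inj n x y :
  zm n.+2 x = x -> zm n.+2 y = y -> res n.+2 x = res n.+2 y -> x = y.
Proof. by move=> canon_x canon_y /zm_resP; rewrite canon_x canon_y. Qed.

Lemma res_double n x y :
  ~~ odd n.+3 -> zm n.+2 x = zm n.+2 y -> res n.+3 (2 * x) = res n.+3 (2 * y).
Proof. by move=> even_n3 /(zm_succ_double even_n3)/zm_resP. Qed.

Lemma res_md n : res n.+2 (md n.+2) = 0.
Proof. by rewrite -(mulr0z 1); apply/zm_resP; rewrite /zm modzz mod0z. Qed.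

Section Division.
Variables (n : nat) (b : int).
Hypothesis odd_b : odd `|b|.

Lemma res_mul_zdiv a : res n.+2 b * res n.+2 (zdiv n.+2 a b) = res n.+2 a.
Proof.
rewrite /zdiv (res_zm n); case: egcdzP => u v Bezout _.
have /eqP gcd1 := coprimez_md n.+2 odd_b.
have : res n.+2 (u * b + v * md n.+2) = 1 by rewrite Bezout gcd1.
rewrite intrD !intrM res_md mulr0 addr0 /= => ub1.
by rewrite mulrCA [_ * u%:~R]mulrC ub1 mulr1.
Qed.

Lemma res_unit : res n.+2 b \is a GRing.unit.
Proof. by apply/unitrPr; exists (res n.+2 (zdiv n.+2 1 b)); rewrite res_mul_zdiv. Qed.

Lemma res_zdiv a : res n.+2 (zdiv n.+2 a b) = res n.+2 a / res n.+2 b.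
Proof. by rewrite -(res_mul_zdiv a) mulrAC divrr ?mul1r // res_unit. Qed.

Lemma zdivD e e1 e2 : zm n.+2 e = zm n.+2 (e1 + e2) ->
  zdiv n.+2 e b = zm n.+2 (zdiv n.+2 e1 b + zdiv n.+2 e2 b).
Proof.
move=> /zm_resP res_e; apply: (@canon_res_inj n); rewrite ?zmK //.
by rewrite res_zm intrD !res_zdiv res_e intrD mulrDl.
Qed.

End Division.

Section Dihedral.
Variables (p q : int) (n : nat).

Lemma dmulI u v w :
  zm n.+2 v.2 = v.2 -> zm n.+2 w.2 = w.2 -> dmul n.+2 u v = dmul n.+2 u w -> v = w.
Proof.
case: u v w => [f x] [g y] [h z] /= canon_y canon_z [/addbI <-].
move=> /zm_resP; rewrite !intrD => /addrI.
by case: f; rewrite ?intrN; [move/oppr_inj|]; move/(canon_res_inj canon_y canon_z) ->.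
Qed.

Lemma dmul_idem u : zm n.+2 u.2 = u.2 -> dmul n.+2 u u = u -> u = (false, 0).
Proof.
move=> canon_u idem_u; apply: (dmulI (u := u)) => //; first by rewrite /zm mod0z.
case: u canon_u idem_u => f x /= canon_x ->.
by rewrite /dmul /= addbF oppr0 if_same addr0 canon_x.
Qed.

Lemma Phi_dmul u v :
  Phi p q n.+2 (dmul n.+2 u v) = dmul n.+2 (Phi p q n.+2 u) (Phi p q n.+2 v).
Proof.
case: u v => [f x] [g y]; rewrite /Phi /dmul /=; congr pair; apply/zm_resP.
by case: f; case: g; rewrite /= !(res_zm, intrD, intrB, intrN); ring.
Qed.

Lemma PhiK u : zm n.+2 u.2 = u.2 -> Phi p q n.+2 (Phi p q n.+2 u) = u.
Proof.
case: u => f x /= canon_x; rewrite /Phi /=; congr pair.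
apply: (@canon_res_inj n) => //; first exact: zmK.
by rewrite !(res_zm, intrB); ring.
Qed.

Lemma Phi1 : Phi p q n.+2 (false, 0) = (false, 0).
Proof. by rewrite /Phi /= subr0 /zm mod0z. Qed.

End Dihedral.

Section Levels.
Variables p q : int.
Hypothesis odd_pq : odd `|p + q|.

Lemma odd_pq2 : odd `|(p + q) ^+ 2|.
Proof. by rewrite abszX oddX. Qed.

Lemma J_node m f (a b : A m.+2) :
  J p q (node f a b) <-> [/\ J p q a, J p q b & Delta p q a = Phi p q m.+2 (Delta p q b)].
Proof. by []. Qed.

Lemma psi_node_odd m f (a b : A m.+2) :
  odd m.+3 -> psi p q (node f a b) = zdiv m.+3 (psi p q a + psi p q b) (p + q).
Proof. by rewrite /psi /= => ->. Qed.

Lemma psi_node_even m f fa fb (aL aR bL bR : A m.+1) : ~~ odd m.+3 ->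
  psi p q (node f (node fa aL aR) (node fb bL bR)) =
  zdiv m.+3 (2 * (psi p q aL + psi p q bL) - (if fa then (p + q) * (p - q) else 0))
       ((p + q) ^+ 2).
Proof. by rewrite /psi /= => /negbTE ->. Qed.

Lemma Delta_node_odd m f (a b : A m.+2) :
  odd m.+3 -> Delta p q (node f a b) = (f, zm m.+3 (psi p q a - psi p q b)).
Proof. by rewrite /Delta => ->. Qed.

Lemma Delta_node_even m f (a b : A m.+2) : ~~ odd m.+3 ->
  Delta p q (node f a b) = (f, zm m.+3 ((p + q) * psi p q (node f a b) - 2 * psi p q b)).
Proof. by rewrite /Delta => /negbTE ->. Qed.

Lemma psi_canon n (g : A n) : zm n (psi p q g) = psi p q g.
Proof.
case: n g => [|[|[|m]]] g.
- by rewrite /psi /= /zm mod0z.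
- by rewrite /psi /= /zm mod0z.
- by rewrite /psi /=; case: ifP.
elim/A_node_ind: g => f a b; elim/A_node_ind: a => fa aL aR; elim/A_node_ind: b => fb bL bR.
by case: (boolP (odd m.+3)) => [/psi_node_odd|/psi_node_even] ->; rewrite zmK.
Qed.

Lemma Delta_canon n (g : A n) : zm n (Delta p q g).2 = (Delta p q g).2.
Proof.
case: n g => [|[|[|m]]] g.
- by rewrite /zm mod0z.
- by rewrite /zm mod0z.
- exact: (psi_canon (g : A 2)).
elim/A_node_ind: g => f a b.
by case: (boolP (odd m.+3)) => [/Delta_node_odd|/Delta_node_even] ->; rewrite zmK.
Qed.

Lemma Delta_Phi_odd m fc fd (cL cR dL dR : A m.+2) : odd m.+3 ->
  Delta p q (node fc cL cR) = Phi p q m.+3 (Delta p q (node fd dL dR)) ->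
  fc = fd /\
    res m.+2 (if fd then (p + q) * (p - q) else 0) =
    res m.+2 (psi p q cL) - res m.+2 (psi p q cR)
    + (res m.+2 (psi p q dL) - res m.+2 (psi p q dR)).
Proof.
move=> odd_m3; rewrite !Delta_node_odd // /Phi /= => -[-> rel]; split=> //.
move: rel; rewrite !(zm_succ_odd _ odd_m3) => /zm_resP.
by rewrite !(res_zm, intrB) => ->; rewrite subrK.
Qed.

Definition subgroup_J n := [/\ J p q (aone n),
  forall g h : A n, J p q g -> J p q h -> J p q (amul g h) &
  forall g : A n, J p q g -> J p q (ainv g)].

Definition psi_morph n := forall g h : A n, J p q g -> J p q h ->
  psi p q (amul g h) = zm n (psi p q g + psi p q h).

Definition Delta_morph n := forall g h : A n, J p q g -> J p q h ->
  Delta p q (amul g h) = dmul n (Delta p q g) (Delta p q h).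

Lemma subgroup_J_succ m : subgroup_J m.+2 -> Delta_morph m.+2 -> subgroup_J m.+3.
Proof.
move=> [J1 JM JV] hom.
have PhiK_Delta (b : A m.+2) : Phi p q m.+2 (Phi p q m.+2 (Delta p q b)) = Delta p q b.
  exact/PhiK/Delta_canon.
have Delta1 : Delta p q (aone m.+2) = (false, 0).
  by apply: (dmul_idem (Delta_canon _)); rewrite -hom // amul1g.
have DeltaV (g : A m.+2) :
    J p q g -> dmul m.+2 (Delta p q g) (Delta p q (ainv g)) = (false, 0).
  by move=> Jg; rewrite -hom ?amulgV ?Delta1 //; apply: JV.
split.
- by apply/J_node; split=> //; rewrite Delta1 Phi1.
- move=> g h; elim/A_node_ind: g => f a b; elim/A_node_ind: h => f' c d.
  move=> /J_node[Ja Jb Eab] /J_node[Jc Jd Ecd]; rewrite amul_node.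
  case: f; apply/J_node; split; try apply: JM; rewrite // !hom // Eab Phi_dmul.
    by rewrite Ecd PhiK_Delta.
  by rewrite Ecd.
- move=> g; elim/A_node_ind: g => f a b /J_node[Ja Jb Eab]; rewrite ainv_node.
  have Eba : Delta p q b = Phi p q m.+2 (Delta p q a) by rewrite Eab PhiK_Delta.
  case: f; apply/J_node; split; try apply: JV; rewrite //.
  + apply: (@dmulI m (Delta p q b)); rewrite /= ?Delta_canon ?zmK //.
    by rewrite DeltaV // {1}Eba -Phi_dmul DeltaV // Phi1.
  + apply: (@dmulI m (Delta p q a)); rewrite /= ?Delta_canon ?zmK //.
    by rewrite DeltaV // {1}Eab -Phi_dmul DeltaV // Phi1.
Qed.

Lemma psi_morph_odd m : odd m.+3 -> psi_morph m.+2 -> psi_morph m.+3.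
Proof.
move=> odd_m3 hom g h; elim/A_node_ind: g => f a b; elim/A_node_ind: h => f' c d.
move=> /J_node[Ja Jb _] /J_node[Jc Jd _]; rewrite amul_node; case: f => /=;
  rewrite !psi_node_odd //; apply: (zdivD odd_pq);
  rewrite !(zm_succ_odd _ odd_m3); apply/zm_resP;
  by rewrite !hom // !(res_zm, intrD); ring.
Qed.

Lemma Delta_morph_odd m : odd m.+3 -> psi_morph m.+2 -> Delta_morph m.+3.
Proof.
move=> odd_m3 hom g h; elim/A_node_ind: g => f a b; elim/A_node_ind: h => f' c d.
move=> /J_node[Ja Jb _] /J_node[Jc Jd _]; rewrite amul_node; case: f => /=;
  rewrite !Delta_node_odd // /dmul /=; congr pair;
  rewrite !(zm_succ_odd _ odd_m3); apply/zm_resP;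
  by rewrite !hom // !(res_zm, intrD, intrB, intrN); ring.
Qed.

Lemma psi_even_sum_children m f (c d : A m.+3) : ~~ odd m.+4 -> J p q (node f c d) ->
  zm m.+3 ((p + q) * psi p q (node f c d)) = zm m.+3 (psi p q c + psi p q d).
Proof.
move=> even_m4; have odd_m3 : odd m.+3 by rewrite /= negbK in even_m4.
elim/A_node_ind: c => fc cL cR; elim/A_node_ind: d => fd dL dR.
case/J_node=> _ _ /(Delta_Phi_odd odd_m3) [<- rel_cd].
set h := node f _ _.
have num_h : res m.+2 ((p + q) ^+ 2 * psi p q h) =
             res m.+2 (2 * (psi p q cL + psi p q dL) - (if fc then (p + q) * (p - q) else 0)).
  apply/zm_resP/zm_succ_eq/zm_succ_eq/zm_resP.
  by rewrite psi_node_even // intrM res_mul_zdiv // odd_pq2.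
rewrite !(zm_succ_odd _ odd_m3) !(psi_node_odd _ _ _ odd_m3) !(zdiv_succ_odd _ _ odd_m3).
apply/zm_resP; apply: (mulrI (res_unit _ odd_pq)).
rewrite intrM mulrA -expr2 -rmorphXn -intrM num_h (intrD _ (zdiv _ _ _)) [in RHS]mulrDr.
by rewrite !(@res_mul_zdiv m _ odd_pq) intrB rel_cd !intrD; ring.
Qed.

Lemma psi_morph_even m : ~~ odd m.+4 -> psi_morph m.+2 -> psi_morph m.+4.
Proof.
move=> even_m4 hom; have odd_m3 : odd m.+3 by rewrite /= negbK in even_m4.
move=> g h; elim/A_node_ind: g => f a b; elim/A_node_ind: h => f' c d.
elim/A_node_ind: a => fa aL aR; elim/A_node_ind: b => fb bL bR.
elim/A_node_ind: c => fc cL cR; elim/A_node_ind: d => fd dL dR.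
case/J_node=> /J_node[JaL _ _] /J_node[JbL _ _] /(Delta_Phi_odd odd_m3) [<- _].
case/J_node=> /J_node[JcL JcR _] /J_node[JdL JdR _] /(Delta_Phi_odd odd_m3) [<- rel_cd].
(* The grandchildren of g h are aL x and bL y with {x, y} = {cL, dL} or {cR, dR}; the
   J-relation between c and d gives the value k of psi x + psi y modulo 2 ^ (m./2).+1,
   and doubling lifts it to the modulus of level m.+4.  The carries then cancel since
   [fa (+) fc] + 2 [fa && fc] = [fa] + [fc]. *)
have sum_LL (x y : A m.+2) k : J p q x -> J p q y ->
    res m.+2 (psi p q x + psi p q y) = res m.+2 k ->
    res m.+4 (2 * (psi p q (amul aL x) + psi p q (amul bL y))) =
    res m.+4 (2 * (psi p q aL + psi p q bL + k)).
  move=> Jx Jy; rewrite intrD => sum_xy; apply: (res_double even_m4).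
  rewrite !(zm_succ_odd _ odd_m3); apply/zm_resP; rewrite !hom // !(res_zm, intrD).
  by rewrite -[res _ (psi p q x)](addrK (res m.+2 (psi p q y))) sum_xy; ring.
have sum_R : res m.+2 (psi p q cR + psi p q dR) =
             res m.+2 (psi p q cL + psi p q dL - (if fc then (p + q) * (p - q) else 0)).
  by rewrite intrB rel_cd !intrD; ring.
move: {sum_LL}(fun x y => sum_LL x y
  (psi p q cL + psi p q dL - (if fa && fc then (p + q) * (p - q) else 0))).
rewrite amul_node; case: f; case: fa => sum_LL; rewrite /= !amul_node /= !psi_node_even //;
  apply: (zdivD odd_pq2); apply/zm_resP; rewrite intrB sum_LL //= ?subr0 ?sum_R 1?addrC //;
  by case: fc {rel_cd sum_R sum_LL}; rewrite /= !(intrD, intrB, intrM); ring.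
Qed.

Lemma Delta_morph_even m :
  ~~ odd m.+4 -> psi_morph m.+3 -> psi_morph m.+4 -> Delta_morph m.+4.
Proof.
move=> even_m4 hom3 hom4 g h; elim/A_node_ind: g => f a b; elim/A_node_ind: h => f' c d.
move=> Jg Jh; have /J_node[Ja Jb _] := Jg; have /J_node[Jc Jd _] := Jh.
have swap_h : zm m.+4 ((p + q) * psi p q (node f' c d) - 2 * psi p q d) =
              zm m.+4 (2 * psi p q c - (p + q) * psi p q (node f' c d)).
  move/(zm_succ_double even_m4)/zm_eqP: (psi_even_sum_children even_m4 Jh) => dvd2.
  apply/zm_eqP; rewrite (_ : _ - _ = 2 * ((p + q) * psi p q (node f' c d))
                                   - 2 * (psi p q c + psi p q d)) //; ring.
rewrite amul_node !Delta_node_even // -amul_node hom4 // /dmul; case: f {Jg} => /=;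
  rewrite hom3 //; [rewrite swap_h|]; congr pair; apply/zm_resP;
  rewrite [LHS]intrB [in LHS]intrM (res_zm m.+2) (res_double even_m4 (zmK _ _));
  by rewrite !(res_zm m.+2, intrD, intrB, intrN, intrM); ring.
Qed.

Definition claims n := [/\ subgroup_J n, psi_morph n & Delta_morph n].

Lemma claims1 : claims 1.
Proof.
split; first by split.
- by move=> g h _ _; rewrite /zm mod0z.
- move=> g h _ _; elim/A_node_ind: g => f a b; elim/A_node_ind: h => f' c d.
  by rewrite amul_node /Delta /dmul /zm /md /= expr0 modz1.
Qed.

Lemma claims2 : claims 2.
Proof.
have J2 (g : A 2) : J p q g ->
    exists f fa, g = node f (node fa (aone 0) (aone 0)) (node fa (aone 0) (aone 0)).
  elim/A_node_ind: g => f a b; rewrite /J /= => <-.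
  by elim/A_node_ind: a => fa [] []; exists f, fa.
split; first split.
- by [].
- by move=> g h /J2[f [fa ->]] /J2[f' [fc ->]]; case: f.
- by move=> g /J2[f [fa ->]]; case: f.
- by move=> g h /J2[f [fa ->]] /J2[f' [fc ->]]; case: f; case: fa; case: fc.
- by move=> g h /J2[f [fa ->]] /J2[f' [fc ->]]; case: f; case: f'; case: fa; case: fc.
Qed.

Lemma claims_succ m : claims m.+1 -> claims m.+2 -> claims m.+3.
Proof.
move=> [_ psi1 _] [J2 psi2 Delta2]; have J3 := subgroup_J_succ J2 Delta2.
have [odd_m3|even_m3] := boolP (odd m.+3).
  by split; [|exact: psi_morph_odd|exact: Delta_morph_odd].
case: m {J2 Delta2} psi1 psi2 J3 even_m3 => // m psi1 psi2 J4 even_m4.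
have psi4 := psi_morph_even even_m4 psi1.
by split; [|exact: psi4|exact: Delta_morph_even].
Qed.

Lemma claims_all n : claims n.+1.
Proof.
suff [] : claims n.+1 /\ claims n.+2 by [].
elim: n => [|n [IH1 IH2]]; first by split; [exact: claims1|exact: claims2].
by split; last exact: claims_succ.
Qed.

End Levels.

Theorem theorem1 (p q : nat) :
  (0 < p)%N -> (0 < q)%N -> odd (p + q) ->
  forall n : nat, (1 <= n)%N ->
  [/\ (* (a) J_n is a subgroup of Aut(T_{n+1}) *)
      J p q (aone n)
      /\ (forall g h : A n, J p q g -> J p q h ->
            J p q (amul g h) /\ J p q (ainv g)),
      (* (b) psi_n is a homomorphism to Z_{2^{floor(n/2)}} *)
      (forall g h : A n, J p q g -> J p q h ->
         psi p q (amul g h) = zm n (psi p q g + psi p q h))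
    & (* (c) Delta_n is a homomorphism to D_{2^{floor(n/2)+1}} *)
      (forall g h : A n, J p q g -> J p q h ->
         Delta p q (amul g h) = dmul n (Delta p q g) (Delta p q h))].
Proof.
move=> _ _ odd_pq [//|n] _.
have odd_pqz : odd `|p%:Z + q%:Z| by rewrite -PoszD.
have [[J1 JM JV] psi_hom Delta_hom] := claims_all odd_pqz n.
by split=> //; split=> // g h Jg Jh; split; [exact: JM|exact: JV].
Qed.
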